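(* If $\vec t\succ\vec t'_1$ and $\vec t\succ\vec t'_2$, then one of the following holds: $\vec t'_1=\vec t'_2$; or $\vec t'_1\succ\vec t'_2$; or $\vec t'_2\succ\vec t'_1$; or there is $\vec t''$ with $\vec t'_1\succ\vec t''$ and $\vec t'_2\succ\vec t''$.
   Context: Calculus. Pure values: $v,w::=x\mid\lambda x.\vec{s}\mid *\mid (v_1,v_2)\mid \mathtt{inl}(v)\mid\mathtt{inr}(v)$. Pure terms: $s,t::=v\mid s\,t\mid t;\vec{s}\mid \mathtt{let}\,(x_1,x_2)=t\,\mathtt{in}\,\vec{s}\mid \mathtt{match}\,t\,\{\mathtt{inl}\,x_1\mapsto\vec{s}_1\mid\mathtt{inr}\,x_2\mapsto\vec{s}_2\}$. Term distributions $\vec{t}::=\vec{0}\mid t\mid \vec{s}+\vec{t}\mid\alpha\cdot\vec{t}$ ($\alpha\in\mathbb{C}$), with equality $=$ at top level meaning the congruence generated by the weak vector space laws ($+$ commutative, associative with unit $\vec0$; $1\cdot\vec t=\vec t$; $\alpha\cdot(\beta\cdot\vec t)=\alpha\beta\cdot\vec t$; $(\alpha+\beta)\cdot\vec t=\alpha\cdot\vec t+\beta\cdot\vec t$; $\alpha\cdot(\vec t_1+\vec t_2)=\alpha\cdot\vec t_1+\alpha\cdot\vec t_2$), not acting inside pure terms and not identifying $0\cdot t$ with $\vec0$. Constructs are extended by linearity (application bilinear, pairs bilinear, $\mathtt{inl},\mathtt{inr}$ linear, $;$, let, match linear in the first argument). Atomic evaluation $t\triangleright\vec t'$: $(\lambda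 x.\vec t)\,v\triangleright\vec t[x:=v]$; $*;\vec s\triangleright\vec s$; $\mathtt{let}\,(x,y)=(v,w)\,\mathtt{in}\,\vec s\triangleright\vec s[x:=v,y:=w]$; $\mathtt{match}\,\mathtt{inl}(v)\{\ldots\}\triangleright\vec s_1[x_1:=v]$; $\mathtt{match}\,\mathtt{inr}(v)\{\ldots\}\triangleright\vec s_2[x_2:=v]$; if $t\triangleright\vec t'$ then $s\,t\triangleright s\,\vec t'$, $t\,v\triangleright\vec t'\,v$, $t;\vec s\triangleright\vec t';\vec s$, and likewise in the scrutinee of let and match ($v,w$ pure values). One-step evaluation: $\vec t\succ\vec t'$ iff $\vec t=\alpha\cdot s+\vec r$ and $\vec t'=\alpha\cdot\vec s'+\vec r$ for some $\alpha\in\mathbb C$, pure term $s$, distributions $\vec s',\vec r$ with $s\triangleright\vec s'$. *)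

From Stdlib Require Import Reals.
From Coquelicot Require Import Coquelicot.

(* De Bruijn syntax (terms up to alpha-equivalence).
   Lam binds 1 variable in its body; Let binds 2 (index 1 = x1, index 0 = x2);
   each Match branch binds 1 variable. *)
Inductive value : Type :=
  | Var  : nat -> value
  | Lam  : tdist -> value
  | Unit : value
  | Pair : value -> value -> value
  | Inl  : value -> value
  | Inr  : value -> value
with term : Type :=
  | Val   : value -> term
  | App   : term -> term -> term
  | Seq   : term -> tdist -> term
  | Let   : term -> tdist -> term
  | Match : term -> tdist -> tdist -> term
with tdist : Type :=
  | DZero : tdist
  | DPure : term -> tdist
  | DAdd  : tdist -> tdist -> tdist
  | DScal : C -> tdist -> tdist.

Definition upren (xi : nat -> nat) (n : nat) : nat :=
  match n with 0 => 0 | S k => S (xi k) end.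

Fixpoint ren_v (xi : nat -> nat) (v : value) : value :=
  match v with
  | Var n => Var (xi n)
  | Lam d => Lam (ren_d (upren xi) d)
  | Unit => Unit
  | Pair a b => Pair (ren_v xi a) (ren_v xi b)
  | Inl a => Inl (ren_v xi a)
  | Inr a => Inr (ren_v xi a)
  end
with ren_t (xi : nat -> nat) (t : term) : term :=
  match t with
  | Val v => Val (ren_v xi v)
  | App s u => App (ren_t xi s) (ren_t xi u)
  | Seq u d => Seq (ren_t xi u) (ren_d xi d)
  | Let u d => Let (ren_t xi u) (ren_d (upren (upren xi)) d)
  | Match u d1 d2 => Match (ren_t xi u) (ren_d (upren xi) d1) (ren_d (upren xi) d2)
  end
with ren_d (xi : nat -> nat) (d : tdist) : tdist :=
  match d with
  | DZero => DZero
  | DPure t => DPure (ren_t xi t)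
  | DAdd a b => DAdd (ren_d xi a) (ren_d xi b)
  | DScal al a => DScal al (ren_d xi a)
  end.

Definition up (sigma : nat -> value) (n : nat) : value :=
  match n with 0 => Var 0 | S k => ren_v S (sigma k) end.

Fixpoint sub_v (sigma : nat -> value) (v : value) : value :=
  match v with
  | Var n => sigma n
  | Lam d => Lam (sub_d (up sigma) d)
  | Unit => Unit
  | Pair a b => Pair (sub_v sigma a) (sub_v sigma b)
  | Inl a => Inl (sub_v sigma a)
  | Inr a => Inr (sub_v sigma a)
  end
with sub_t (sigma : nat -> value) (t : term) : term :=
  match t with
  | Val v => Val (sub_v sigma v)
  | App s u => App (sub_t sigma s) (sub_t sigma u)
  | Seq u d => Seq (sub_t sigma u) (sub_d sigma d)
  | Let u d => Let (sub_t sigma u) (sub_d (up (up sigma)) d)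
  | Match u d1 d2 => Match (sub_t sigma u) (sub_d (up sigma) d1) (sub_d (up sigma) d2)
  end
with sub_d (sigma : nat -> value) (d : tdist) : tdist :=
  match d with
  | DZero => DZero
  | DPure t => DPure (sub_t sigma t)
  | DAdd a b => DAdd (sub_d sigma a) (sub_d sigma b)
  | DScal al a => DScal al (sub_d sigma a)
  end.

Definition subst1 (v : value) (d : tdist) : tdist :=
  sub_d (fun n => match n with 0 => v | S k => Var k end) d.

Definition subst2 (v w : value) (d : tdist) : tdist :=
  sub_d (fun n => match n with 0 => w | 1 => v | S (S k) => Var k end) d.

Fixpoint dlin (f : term -> term) (d : tdist) : tdist :=
  match d with
  | DZero => DZero
  | DPure t => DPure (f t)
  | DAdd a b => DAdd (dlin f a) (dlin f b)
  | DScal al a => DScal al (dlin f a)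
  end.

(* Weak vector space equality on distributions (top level only) *)
Inductive deq : tdist -> tdist -> Prop :=
  | deq_refl  : forall d, deq d d
  | deq_sym   : forall d e, deq d e -> deq e d
  | deq_trans : forall d e f, deq d e -> deq e f -> deq d f
  | deq_add   : forall d d' e e', deq d d' -> deq e e' -> deq (DAdd d e) (DAdd d' e')
  | deq_scal  : forall al d d', deq d d' -> deq (DScal al d) (DScal al d')
  | deq_addC  : forall d e, deq (DAdd d e) (DAdd e d)
  | deq_addA  : forall d e f, deq (DAdd d (DAdd e f)) (DAdd (DAdd d e) f)
  | deq_add0  : forall d, deq (DAdd d DZero) d
  | deq_scal1 : forall d, deq (DScal (RtoC 1) d) d
  | deq_scalA : forall al be d, deq (DScal al (DScal be d)) (DScal (Cmult al be) d)
  | deq_scalDl : forall al be d,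
      deq (DScal (Cplus al be) d) (DAdd (DScal al d) (DScal be d))
  | deq_scalDr : forall al d e,
      deq (DScal al (DAdd d e)) (DAdd (DScal al d) (DScal al e)).

Inductive atomic : term -> tdist -> Prop :=
  | at_beta  : forall d v, atomic (App (Val (Lam d)) (Val v)) (subst1 v d)
  | at_seq   : forall s, atomic (Seq (Val Unit) s) s
  | at_let   : forall v w s, atomic (Let (Val (Pair v w)) s) (subst2 v w s)
  | at_inl   : forall v s1 s2, atomic (Match (Val (Inl v)) s1 s2) (subst1 v s1)
  | at_inr   : forall v s1 s2, atomic (Match (Val (Inr v)) s1 s2) (subst1 v s2)
  | at_appR  : forall s t d, atomic t d -> atomic (App s t) (dlin (App s) d)
  | at_appL  : forall t v d, atomic t d ->
      atomic (App t (Val v)) (dlin (fun u => App u (Val v)) d)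
  | at_seqC  : forall t s d, atomic t d -> atomic (Seq t s) (dlin (fun u => Seq u s) d)
  | at_letC  : forall t s d, atomic t d -> atomic (Let t s) (dlin (fun u => Let u s) d)
  | at_matchC : forall t s1 s2 d, atomic t d ->
      atomic (Match t s1 s2) (dlin (fun u => Match u s1 s2) d).

Definition step (t t' : tdist) : Prop :=
  exists (al : C) (s : term) (s' r : tdist),
    deq t (DAdd (DScal al (DPure s)) r) /\
    deq t' (DAdd (DScal al s') r) /\
    atomic s s'.

From Stdlib Require Import Reals Setoid List Classical ClassicalEpsilon.
From Coquelicot Require Import Coquelicot.
Local Open Scope C_scope.

(* Weak vector space equality is characterised by two invariants: the
   coefficient of each pure term, and the set of pure terms occurring at all
   (the weak laws never erase a summand [0 * t]).  Completeness follows by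
   pulling out all occurrences of one pure term at a time.

   Write [t = a1 s1 + r1 = a2 s2 + r2] for the two decompositions.  If
   [s1 = s2], atomic evaluation is deterministic and the two results differ
   only in how much of [s1] was contracted: if the remainder [r2] still
   contains [s1], the second result reaches the first by contracting the
   summand [(a1 - a2) s1]; symmetrically for [r1]; otherwise [a1 = a2] and
   the results are equal.  If [s1 <> s2], each redex occurs in the other
   remainder, so [t = a1 s1 + a2 s2 + r], and contracting the other redex
   gives a common reduct. *)

Lemma not_atomic_Val v d : ~ atomic (Val v) d.
Proof. intros H; inversion H. Qed.

Lemma atomic_det s d1 d2 : atomic s d1 -> atomic s d2 -> d1 = d2.
Proof.
  intros H; revert d2; induction H; intros d2 H2; inversion H2; subst;
    try reflexivity; try (f_equal; auto; fail);
    exfalso; eapply not_atomic_Val; eassumption.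
Qed.

Add Parametric Relation : tdist deq
  reflexivity proved by deq_refl
  symmetry proved by deq_sym
  transitivity proved by deq_trans
  as deq_rel.

Add Parametric Morphism : DAdd with signature deq ==> deq ==> deq as DAdd_deq.
Proof. intros; apply deq_add; assumption. Qed.

Add Parametric Morphism al : (DScal al) with signature deq ==> deq as DScal_deq.
Proof. intros; apply deq_scal; assumption. Qed.

Lemma deq_scal_zero al : deq (DScal al DZero) DZero.
Proof.
  assert (Z : deq (DScal 0 DZero) DZero).
  { transitivity (DAdd DZero (DScal 0 DZero)).
    - rewrite deq_addC, deq_add0; reflexivity.
    - rewrite <- (deq_scal1 DZero) at 1.
      rewrite <- deq_scalDl, Cplus_0_r. apply deq_scal1. }
  rewrite <- Z at 1. rewrite deq_scalA, Cmult_0_r. exact Z.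
Qed.

Lemma deq_addCA a b c : deq (DAdd a (DAdd b c)) (DAdd b (DAdd a c)).
Proof. rewrite !deq_addA, (deq_addC a); reflexivity. Qed.

Lemma deq_addACA a b c d :
  deq (DAdd (DAdd a b) (DAdd c d)) (DAdd (DAdd a c) (DAdd b d)).
Proof. rewrite <- !deq_addA, (deq_addCA b); reflexivity. Qed.

Definition term_eq_dec (x y : term) : {x = y} + {x <> y} :=
  excluded_middle_informative (x = y).

Fixpoint coef (d : tdist) (u : term) : C :=
  match d with
  | DZero => 0
  | DPure t => if term_eq_dec t u then 1 else 0
  | DAdd a b => coef a u + coef b u
  | DScal al a => al * coef a u
  end.

Ltac decide_terms :=
  repeat match goal with
         | |- context [term_eq_dec ?x ?y] => destruct (term_eq_dec x y); try congruence
         end.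

Fixpoint supp (d : tdist) (u : term) : Prop :=
  match d with
  | DZero => False
  | DPure t => t = u
  | DAdd a b => supp a u \/ supp b u
  | DScal _ a => supp a u
  end.

Definition sem_eq (d e : tdist) : Prop :=
  (forall u, coef d u = coef e u) /\ (forall u, supp d u <-> supp e u).

Lemma sem_eq_sym d e : sem_eq d e -> sem_eq e d.
Proof. intros [Hc Hs]; split; intros u; [symmetry; apply Hc | symmetry; apply Hs]. Qed.

Lemma deq_sem_eq d e : deq d e -> sem_eq d e.
Proof.
  unfold sem_eq; induction 1; simpl in *;
    repeat match goal with H : _ /\ _ |- _ => destruct H end;
    split; intros u; try ring; try firstorder congruence.
Qed.

Lemma coef_nsupp d u : ~ supp d u -> coef d u = 0.
Proof.
  induction d; simpl; intros H.
  - reflexivity.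
  - destruct (term_eq_dec t u); [contradiction | reflexivity].
  - rewrite IHd1, IHd2 by tauto; ring.
  - rewrite IHd by tauto; ring.
Qed.

Fixpoint dfilter (P : term -> Prop) (d : tdist) : tdist :=
  match d with
  | DZero => DZero
  | DPure t => if excluded_middle_informative (P t) then DPure t else DZero
  | DAdd a b => DAdd (dfilter P a) (dfilter P b)
  | DScal al a => DScal al (dfilter P a)
  end.

Lemma supp_dfilter P d u : supp (dfilter P d) u <-> supp d u /\ P u.
Proof.
  induction d; simpl; try tauto.
  destruct (excluded_middle_informative (P t)); simpl; intuition congruence.
Qed.

Lemma coef_dfilter P d u : P u -> coef (dfilter P d) u = coef d u.
Proof.
  intros Pu; induction d; simpl; try congruence.
  destruct (excluded_middle_informative (P t)); simpl; [reflexivity|].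
  destruct (term_eq_dec t u); congruence.
Qed.

Lemma coef_dfilter_out P d u : ~ P u -> coef (dfilter P d) u = 0.
Proof. intros nPu; apply coef_nsupp; rewrite supp_dfilter; tauto. Qed.

Lemma dfilter_id P d : (forall u, supp d u -> P u) -> dfilter P d = d.
Proof.
  induction d; simpl; intros H; f_equal; auto.
  destruct (excluded_middle_informative (P t)); [reflexivity|].
  exfalso; auto.
Qed.

Lemma deq_extract d u : supp d u ->
  deq d (DAdd (DScal (coef d u) (DPure u)) (dfilter (fun t => t <> u) d)).
Proof.
  induction d as [|t|a IHa b IHb|al a IHa]; simpl; intros Hu.
  - contradiction.
  - subst t; destruct (term_eq_dec u u) as [_|]; [|congruence].
    destruct (excluded_middle_informative (u <> u)); [congruence|].
    rewrite deq_add0, deq_scal1; reflexivity.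
  - assert (Hid : forall e, ~ supp e u -> dfilter (fun t => t <> u) e = e).
    { intros e He; apply dfilter_id; intros v Hv ->; contradiction. }
    destruct (classic (supp a u)) as [Ha|Ha], (classic (supp b u)) as [Hb|Hb].
    + rewrite (IHa Ha) at 1; rewrite (IHb Hb) at 1.
      rewrite deq_addACA, <- deq_scalDl; reflexivity.
    + rewrite (IHa Ha) at 1.
      rewrite (coef_nsupp b u Hb), Cplus_0_r, (Hid b Hb), deq_addA; reflexivity.
    + rewrite (IHb Hb) at 1.
      rewrite (coef_nsupp a u Ha), Cplus_0_l, (Hid a Ha).
      apply deq_addCA.
    + tauto.
  - rewrite (IHa Hu) at 1. rewrite deq_scalDr, deq_scalA; reflexivity.
Qed.

Lemma supp_finite d : exists K, forall u, supp d u -> In u K.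
Proof.
  induction d as [|t|a [Ka HKa] b [Kb HKb]|al a IHa]; simpl.
  - exists nil; tauto.
  - exists (t :: nil); simpl; auto.
  - exists (Ka ++ Kb); intros u Hu; apply in_or_app; firstorder.
  - exact IHa.
Qed.

Lemma deq_zero_of_nsupp d : (forall u, ~ supp d u) -> deq d DZero.
Proof.
  induction d as [|t|a IHa b IHb|al a IHa]; simpl; intros H.
  - reflexivity.
  - exfalso; apply (H t); reflexivity.
  - rewrite IHa, IHb by firstorder; apply deq_add0.
  - rewrite IHa by assumption; apply deq_scal_zero.
Qed.

Lemma sem_eq_deq d e : sem_eq d e -> deq d e.
Proof.
  destruct (supp_finite d) as [K HK]; revert d e HK.
  induction K as [|k K IH]; intros d e HK [Hc Hs].
  - rewrite (deq_zero_of_nsupp d), (deq_zero_of_nsupp e); [reflexivity| |];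
      intros u Hu; [apply (HK u), Hs, Hu | apply (HK u Hu)].
  - destruct (classic (supp d k)) as [Hk|Hk].
    + rewrite (deq_extract d k Hk), (deq_extract e k (proj1 (Hs k) Hk)), Hc.
      apply deq_add; [reflexivity|]. apply IH.
      * intros u; rewrite supp_dfilter; intros [Hu Hne].
        destruct (HK u Hu); [congruence | assumption].
      * split; intros u; [|rewrite !supp_dfilter, Hs; reflexivity].
        destruct (classic (u = k)) as [->|Hne].
        -- rewrite !coef_dfilter_out by tauto; reflexivity.
        -- rewrite !coef_dfilter by assumption; apply Hc.
    + apply IH; [|split; assumption].
      intros u Hu; destruct (HK u Hu); [subst; contradiction | assumption].
Qed.

Lemma step_deq d d' e e' : deq d d' -> deq e e' -> step d e -> step d' e'.
Proof.
  intros Hd He (al & s & s' & r & Hs & Hs' & A).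
  exists al, s, s', r; split; [|split]; [rewrite <- Hd | rewrite <- He | ]; assumption.
Qed.

Lemma step_of_sem_eq t t' al s s' r :
  sem_eq t (DAdd (DScal al (DPure s)) r) -> sem_eq t' (DAdd (DScal al s') r) ->
  atomic s s' -> step t t'.
Proof.
  intros H H' A; exists al, s, s', r.
  split; [apply sem_eq_deq, H | split; [apply sem_eq_deq, H' | exact A]].
Qed.

Definition one_step_joinable (t1 t2 : tdist) : Prop :=
  deq t1 t2 \/ step t1 t2 \/ step t2 t1 \/
  (exists t'' : tdist, step t1 t'' /\ step t2 t'').

Lemma one_step_joinable_deq t1 t2 u1 u2 :
  deq t1 u1 -> deq t2 u2 -> one_step_joinable u1 u2 -> one_step_joinable t1 t2.
Proof.
  intros H1 H2 [J | [J | [J | (t'' & J1 & J2)]]].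
  - left; rewrite H1, H2; exact J.
  - right; left; revert J; apply step_deq; symmetry; assumption.
  - right; right; left; revert J; apply step_deq; symmetry; assumption.
  - right; right; right; exists t''; split;
      [revert J1 | revert J2]; apply step_deq; (symmetry; assumption) || reflexivity.
Qed.

Section TwoDecompositions.

Variables (a1 a2 : C) (s1 s2 : term) (r1 r2 : tdist).

Hypothesis E :
  sem_eq (DAdd (DScal a1 (DPure s1)) r1) (DAdd (DScal a2 (DPure s2)) r2).

Lemma coef_remainder u :
  coef r2 u = a1 * coef (DPure s1) u + coef r1 u - a2 * coef (DPure s2) u.
Proof. destruct E as [Hc _]; specialize (Hc u); simpl in *; rewrite Hc; ring. Qed.

Lemma sem_eq_split_redexes : s1 <> s2 ->
  exists r, sem_eq r1 (DAdd (DScal a2 (DPure s2)) r) /\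
            sem_eq r2 (DAdd (DScal a1 (DPure s1)) r).
Proof.
  intros Hne; destruct E as [_ Hs].
  set (r := DAdd (dfilter (fun t => t <> s2) r1) (dfilter (fun t => t = s2) r2)).
  assert (coef_r : forall u, coef r u = coef r1 u - a2 * coef (DPure s2) u).
  { intros u; simpl; destruct (classic (u = s2)) as [->|Hu].
    - rewrite coef_dfilter_out, coef_dfilter, coef_remainder by congruence.
      simpl; decide_terms; ring.
    - rewrite coef_dfilter, coef_dfilter_out by congruence.
      simpl; decide_terms; ring. }
  assert (supp_r : forall u, supp r u <-> supp r1 u /\ supp r2 u).
  { intros u; simpl; rewrite !supp_dfilter; specialize (Hs u); simpl in Hs.
    destruct (classic (u = s1)), (classic (u = s2)); subst; intuition congruence. }
  clearbody r; exists r; split; split; intros u; simpl; rewrite ?coef_r, ?supp_r.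
  all: try (rewrite ?coef_remainder; simpl; ring).
  all: specialize (Hs u); simpl in Hs.
  all: destruct (classic (u = s1)), (classic (u = s2)); subst; intuition congruence.
Qed.

End TwoDecompositions.

Section SameRedex.

Variables (a1 a2 : C) (s : term) (r1 r2 : tdist).

Hypothesis E :
  sem_eq (DAdd (DScal a1 (DPure s)) r1) (DAdd (DScal a2 (DPure s)) r2).

Lemma step_redex_in_remainder s' : supp r2 s -> atomic s s' ->
  step (DAdd (DScal a2 s') r2) (DAdd (DScal a1 s') r1).
Proof.
  intros Hr2 A; destruct E as [_ Hs].
  apply (step_of_sem_eq _ _ (a1 - a2) s s' (DAdd (DScal a2 s') r1));
    [split; intros u; simpl | split; intros u; simpl; [ring | tauto] | exact A].
  - rewrite (coef_remainder _ _ _ _ _ _ E); simpl; ring.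
  - specialize (Hs u); simpl in Hs.
    destruct (classic (s = u)) as [<-|]; tauto.
Qed.

Lemma sem_eq_cancel_redex : ~ supp r1 s -> ~ supp r2 s -> a1 = a2 /\ sem_eq r1 r2.
Proof.
  intros Hr1 Hr2; destruct E as [Hc Hs].
  assert (Ha : a1 = a2).
  { specialize (Hc s); simpl in Hc; destruct (term_eq_dec s s); [|congruence].
    rewrite !coef_nsupp, !Cmult_1_r, !Cplus_0_r in Hc by assumption; exact Hc. }
  split; [exact Ha | split; intros u].
  - rewrite (coef_remainder _ _ _ _ _ _ E), Ha; ring.
  - specialize (Hs u); simpl in Hs.
    destruct (classic (s = u)) as [<-|]; tauto.
Qed.

End SameRedex.

Lemma joinable_same_redex a1 a2 s s' r1 r2 :
  sem_eq (DAdd (DScal a1 (DPure s)) r1) (DAdd (DScal a2 (DPure s)) r2) ->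
  atomic s s' -> one_step_joinable (DAdd (DScal a1 s') r1) (DAdd (DScal a2 s') r2).
Proof.
  intros E A.
  destruct (classic (supp r2 s)) as [Hr2|Hr2];
    [|destruct (classic (supp r1 s)) as [Hr1|Hr1]].
  - right; right; left; exact (step_redex_in_remainder _ _ _ _ _ E s' Hr2 A).
  - right; left; exact (step_redex_in_remainder _ _ _ _ _ (sem_eq_sym _ _ E) s' Hr1 A).
  - left; destruct (sem_eq_cancel_redex _ _ _ _ _ E Hr1 Hr2) as [<- Hr].
    apply deq_add; [reflexivity | apply sem_eq_deq, Hr].
Qed.

Lemma joinable_distinct_redexes a1 a2 s1 s2 s1' s2' r1 r2 : s1 <> s2 ->
  sem_eq (DAdd (DScal a1 (DPure s1)) r1) (DAdd (DScal a2 (DPure s2)) r2) ->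
  atomic s1 s1' -> atomic s2 s2' ->
  one_step_joinable (DAdd (DScal a1 s1') r1) (DAdd (DScal a2 s2') r2).
Proof.
  intros Hne E A1 A2.
  destruct (sem_eq_split_redexes _ _ _ _ _ _ E Hne) as (r & Hr1 & Hr2).
  right; right; right; exists (DAdd (DScal a1 s1') (DAdd (DScal a2 s2') r)); split.
  - exists a2, s2, s2', (DAdd (DScal a1 s1') r); split; [|split; [|exact A2]].
    + rewrite (sem_eq_deq _ _ Hr1); apply deq_addCA.
    + apply deq_addCA.
  - exists a1, s1, s1', (DAdd (DScal a2 s2') r); split; [|split; [|exact A1]].
    + rewrite (sem_eq_deq _ _ Hr2); apply deq_addCA.
    + reflexivity.
Qed.

Theorem mainTheorem8 (t t1 t2 : tdist) :
  step t t1 -> step t t2 ->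
  deq t1 t2 \/ step t1 t2 \/ step t2 t1 \/
  (exists t'' : tdist, step t1 t'' /\ step t2 t'').
Proof.
  intros (a1 & s1 & s1' & r1 & Ht1 & Ht1' & A1) (a2 & s2 & s2' & r2 & Ht2 & Ht2' & A2).
  change (one_step_joinable t1 t2).
  apply (one_step_joinable_deq _ _ _ _ Ht1' Ht2').
  assert (E : sem_eq (DAdd (DScal a1 (DPure s1)) r1) (DAdd (DScal a2 (DPure s2)) r2)).
  { apply deq_sem_eq; rewrite <- Ht1; exact Ht2. }
  destruct (classic (s1 = s2)) as [<-|Hne].
  - rewrite (atomic_det _ _ _ A1 A2); exact (joinable_same_redex _ _ _ _ _ _ E A2).
  - exact (joinable_distinct_redexes _ _ _ _ _ _ _ _ Hne E A1 A2).
Qed.
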